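(* Let $E$ be a set and let $\mathcal{F}$ be a set of finite nonempty subsets of $E$ satisfying the strong circuit elimination axiom: for every $C_0,C_1\in\mathcal{F}$, $e\in C_0\cap C_1$ and $f\in C_0\triangle C_1$ there is $C\in\mathcal{F}$ with $f\in C\subseteq(C_0\cup C_1)\setminus\{e\}$. Then the set $\mathcal{C}$ of $\subseteq$-minimal elements of $\mathcal{F}$ is the set of circuits of a finitary matroid $M$ on $E$, and each $F\in\mathcal{F}$ is a scrawl of $M$, i.e. a union of circuits of $M$.
   Context: A finitary matroid is a matroid on a possibly infinite ground set all of whose circuits are finite. $X\triangle Y=(X\setminus Y)\cup(Y\setminus X)$. *)

From mathcomp Require Import all_boot.
From mathcomp Require Import boolp classical_sets cardinality.
Set Implicit Arguments. Unset Strict Implicit. Unset Printing Implicit Defensive.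
Local Open Scope classical_set_scope.

Section Matroid.
Variable E : Type.

Definition maximal_in (P : set (set E)) (A : set E) : Prop :=
  P A /\ forall B, P B -> A `<=` B -> B = A.

Definition minimal_in (P : set (set E)) (A : set E) : Prop :=
  P A /\ forall B, P B -> B `<=` A -> B = A.

(* Independence axioms of (possibly infinite) matroids on the ground set E
   (Bruhn, Diestel, Kriesell, Pendavingh, Wollan): (I1), (I2), (I3), (IM). *)
Definition is_matroid (I : set (set E)) : Prop :=
  [/\ I set0,
      (forall A B, I B -> A `<=` B -> I A),
      (forall A B, I A -> ~ maximal_in I A -> maximal_in I B ->
         exists x, B x /\ ~ A x /\ I (A `|` [set x]))
    & (forall A X, I A -> A `<=` X ->
         exists M, maximal_in (fun B => I B /\ A `<=` B /\ B `<=` X) M)].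

Definition circuit (I : set (set E)) (C : set E) : Prop :=
  minimal_in (fun D => ~ I D) C.

Definition is_finitary_matroid (I : set (set E)) : Prop :=
  is_matroid I /\ forall C, circuit I C -> finite_set C.

Definition strong_circuit_elimination (F : set (set E)) : Prop :=
  forall C0 C1 e f, F C0 -> F C1 -> C0 e -> C1 e ->
    ((C0 `\` C1) `|` (C1 `\` C0)) f ->
    exists C, F C /\ C f /\ C `<=` (C0 `|` C1) `\ e.

End Matroid.

(* Call a set independent when it contains no member of F; the circuits of
   this independence system are exactly the minimal members of F. As the
   members of F are finite, independence has finite character, which gives
   (IM) by Zorn's lemma. A member Z of F
   strictly inside a member Y through x and missing x can be eliminated
   against Y at any e in Z keeping x, so a minimal member of F through x
   inside Y is minimal in F; hence every member of F is a union of circuits.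
   For the augmentation axiom, suppose A and A + y are independent, y is not
   in the maximal independent set B, and A + x is dependent for every x in
   B \ A. Since B + y is dependent, some D in F satisfies y in D <= B + y.
   Eliminating D, one element x of D \ (A + y) at a time, against a member
   of F inside A + x while keeping y ends in a member of F inside A + y, a
   contradiction. *)

From mathcomp Require Import all_boot finmap.
From mathcomp Require Import boolp classical_sets cardinality.
Local Open Scope classical_set_scope.
Set Implicit Arguments. Unset Strict Implicit.

Section FiniteSets.
Variable T : Type.
Implicit Types A B Y : set T.

Lemma finite_set_ind (P : set T -> Prop) :
  (forall A, finite_set A -> (forall B, B `<` A -> P B) -> P A) ->
  forall A, finite_set A -> P A.
Proof.
move=> IH A; pose size_of (B : set T) := #|` fset_set (B : set {classic T})|.
have [n] := ubnP (size_of A); elim: n A => // n IHn A.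
rewrite ltnS => leAn fA; apply: IH => // B [BA nAB].
have fB : finite_set B := sub_finite_set BA fA.
have ltBA : (size_of B < size_of A)%N.
  apply: fproper_ltn_card; rewrite fproperE; apply/andP; split.
    by rewrite -fset_set_sub.
  by apply/negP; rewrite -fset_set_sub.
exact: IHn (leq_trans ltBA leAn) fB.
Qed.

Lemma finite_minimal_in (Q : set (set T)) A :
  finite_set A -> Q A -> exists2 B, B `<=` A & minimal_in Q B.
Proof.
move: A; apply: finite_set_ind => A _ IH QA.
have [minA|] := pselect (forall B, Q B -> B `<=` A -> B = A); first by exists A.
move=> /existsNP [B /not_implyP [QB /not_implyP [BA /eqP nBA]]].
have [|C CB minC] := IH B _ QB; first by rewrite properEneq.
by exists C => //; apply: subset_trans CB BA.
Qed.

Lemma finite_subset_bigcup_chain (K : set (set T)) Y :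
  total_on K subset -> finite_set Y -> Y `<=` \bigcup_(G in K) G ->
  Y = set0 \/ exists2 G, K G & Y `<=` G.
Proof.
move=> Ktot; move: Y; apply: finite_set_ind => Y _ IH YK.
have [|/eqP/set0P [y Yy]] := pselect (Y = set0); [by left | right].
have YG G : Y `\ y `<=` G -> G y -> Y `<=` G.
  by move=> sG Gy z Yz; have [->//|zy] := pselect (z = y); apply: sG.
have ltY : Y `\ y `<` Y.
  by split=> [|/(_ y Yy) [_]]; [exact: subDsetl | apply].
have [G2 KG2 G2y] := YK y Yy.
have [Y0|[G1 KG1 sG1]] := IH _ ltY (subset_trans (@subDsetl _ _ _) YK).
  by exists G2 => //; apply: YG => //; rewrite Y0.
have [G12|G21] := Ktot _ _ KG1 KG2.
  by exists G2 => //; apply: YG (subset_trans sG1 G12) G2y.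
by exists G1 => //; apply: YG sG1 (G21 _ G2y).
Qed.

End FiniteSets.

Definition indep (E : Type) (F : set (set E)) (D : set E) :=
  forall Y, F Y -> ~ Y `<=` D.

Definition indep_span (E : Type) (F : set (set E)) (A : set E) :=
  A `|` [set x | ~ indep F (A `|` [set x])].

Section Indep.
Variables (E : Type) (F : set (set E)).
Hypothesis F_fin : forall X, F X -> finite_set X.
Hypothesis F_neq0 : forall X, F X -> X !=set0.
Hypothesis F_elim : strong_circuit_elimination F.

Lemma indep_sub A B : indep F B -> A `<=` B -> indep F A.
Proof. by move=> iB AB Y FY YA; apply: (iB Y FY); apply: subset_trans YA AB. Qed.

Lemma not_indep_ex D : ~ indep F D -> exists2 Y, F Y & Y `<=` D.
Proof.
move=> /existsNP [Y /not_implyP [FY /contrapT YD]]; by exists Y.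
Qed.

Lemma indep0 : indep F set0.
Proof. by move=> Y /F_neq0 [y Yy] /(_ y Yy). Qed.

Lemma circuit_indepE C : circuit (indep F) C <-> minimal_in F C.
Proof.
split=> [[dC minC]|[FC minC]].
  have [Y FY YC] := not_indep_ex dC.
  have YeC : Y = C by apply: minC => // iY; apply: (iY Y FY).
  rewrite YeC in FY; split=> // B FB BC.
  by apply: minC => // iB; apply: (iB B FB).
split=> [iC|B dB BC]; first by apply: (iC C FC).
have [Y FY YB] := not_indep_ex dB.
have YeC : Y = C by apply: minC => //; apply: subset_trans YB BC.
by apply/seteqP; split=> //; rewrite -YeC.
Qed.

Lemma indep_setU_bigcup A K : total_on K subset -> indep F A ->
  (forall G, K G -> indep F (A `|` G)) -> indep F (A `|` \bigcup_(G in K) G).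
Proof.
move=> Ktot iA iK Y FY YU.
have YAK : Y `\` A `<=` \bigcup_(G in K) G by move=> z [/YU []].
have fYA : finite_set (Y `\` A) := finite_setD A (F_fin FY).
have [YA0|[G KG YAG]] := finite_subset_bigcup_chain Ktot fYA YAK.
  by apply: (iA Y FY); rewrite -setD_eq0.
apply: (iK G KG Y FY) => z Yz.
by have [Az|nAz] := pselect (A z); [left | right; apply: YAG].
Qed.

Lemma indep_maximal_between A X : indep F A -> A `<=` X ->
  exists M, maximal_in (fun B => indep F B /\ A `<=` B /\ B `<=` X) M.
Proof.
move=> iA AX.
(* Zorn is applied to the sets B with A `|` B independent, because the empty
   chain has union set0, which need not contain A. *)
have [|M [[iAM MX] maxM]] := Zorn_bigcup (P := fun B => indep F (A `|` B) /\ B `<=` X).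
  move=> K KP Ktot; split; last by move=> z [G /KP [_ GX] /GX].
  by apply: indep_setU_bigcup => // G /KP [].
exists (A `|` M); split.
  by split=> //; split; [apply: subsetUl | rewrite subUset].
move=> B [iB [AB BX]] AMB; apply/seteqP; split=> //.
apply: contrapT => nBAM; apply: (maxM B); last by rewrite (setUidPr _ _).2.
split=> [|BM]; first exact: subset_trans (@subsetUr _ A M) AMB.
by apply: nBAM; apply: subset_trans BM (@subsetUr _ A M).
Qed.

Lemma indep_setU1_of_not_maximal A : indep F A -> ~ maximal_in (indep F) A ->
  exists2 y, ~ A y & indep F (A `|` [set y]).
Proof.
move=> iA nmaxA; apply: contrapT => noext; apply: nmaxA; split=> // B iB AB.
apply/seteqP; split=> // x Bx; apply: contrapT => nAx; apply: noext; exists x => //.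
by apply: indep_sub iB _ => z [/AB|->].
Qed.

Lemma indep_sub_setU1_mem A Y x :
  indep F A -> F Y -> Y `<=` A `|` [set x] -> Y x.
Proof.
move=> iA FY YAx; apply: contrapT => nYx; apply: (iA Y FY) => z Yz.
by case: (YAx z Yz) => // zx; rewrite zx in Yz.
Qed.

Lemma not_indep_setU1_span A D y : indep F A -> ~ A y ->
  F D -> D y -> D `<=` indep_span F A `|` [set y] -> ~ indep F (A `|` [set y]).
Proof.
move=> iA nAy FD Dy DAy.
suff: forall R, finite_set R -> forall D, F D -> D y ->
    D `<=` indep_span F A `|` [set y] -> D `\` (A `|` [set y]) `<=` R ->
    ~ indep F (A `|` [set y]).
  by move=> /(_ _ (finite_setD _ (F_fin FD)) D FD Dy DAy (@subset_refl _ _)).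
apply: finite_set_ind => R _ IH {FD Dy DAy}D FD Dy DAy DR iAy.
have [DsubAy|/existsNP [x /not_implyP [Dx nx]]] :=
  pselect (D `<=` A `|` [set y]); first by apply: (iAy D FD).
have [nAx xy] := (not_orP _ _).1 nx.
have dAx : ~ indep F (A `|` [set x]).
  by case: (DAy x Dx) => [[/nAx|]|/xy].
have [Y FY YAx] := not_indep_ex dAx.
have Yx : Y x := indep_sub_setU1_mem iA FY YAx.
have nYy : ~ Y y by move=> /YAx [/nAy|/esym/xy].
have [C [FC [Cy CDY]]] := F_elim FD FY Dx Yx (or_introl (conj Dy nYy)).
apply: (IH (R `\ x) _ C FC Cy _ _ iAy).
- by split=> [|/(_ x (DR x (conj Dx nx))) [_]]; [exact: subDsetl | apply].
- move=> z /CDY [[/DAy//|/YAx [Az|zx]] nzx]; first by left; left.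
  by case: (nzx zx).
- move=> z [/CDY [[Dz|/YAx [Az|zx]] nzx] nz].
  + by split=> //; apply: DR.
  + by case: nz; left.
  + by case: (nzx zx).
Qed.

Lemma indep_exchange A B : indep F A -> ~ maximal_in (indep F) A ->
  maximal_in (indep F) B -> exists x, B x /\ ~ A x /\ indep F (A `|` [set x]).
Proof.
move=> iA nmaxA [iB maxB].
have [y nAy iAy] := indep_setU1_of_not_maximal iA nmaxA.
have [By|nBy] := pselect (B y); first by exists y.
apply: contrapT => noext.
have B_span : B `<=` indep_span F A.
  move=> x Bx; have [Ax|nAx] := pselect (A x); [by left | right => iAx].
  by apply: noext; exists x.
have [D FD DBy] : exists2 D, F D & D `<=` B `|` [set y].
  apply: not_indep_ex => iBy; apply: nBy.
  by rewrite -(maxB _ iBy (@subsetUl _ B [set y])); right.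
have Dy : D y := indep_sub_setU1_mem iB FD DBy.
apply: (not_indep_setU1_span iA nAy FD Dy _ iAy).
by move=> z /DBy [/B_span|]; [left | right].
Qed.

Lemma minimal_in_through X x : F X -> X x ->
  exists2 C, minimal_in F C & C x /\ C `<=` X.
Proof.
move=> FX Xx.
pose through_x Y := [/\ F Y, Y x & Y `<=` X].
have [Y YX [[FY Yx _] minY]] :=
  finite_minimal_in (F_fin FX) (And3 FX Xx (@subset_refl _ X) : through_x X).
exists Y => //; split=> // Z FZ ZY.
have [Zx|nZx] := pselect (Z x).
  by apply: minY => //; split=> //; apply: subset_trans ZY YX.
have [e Ze] := F_neq0 FZ.
have [C [FC [Cx CYZ]]] := F_elim FY FZ (ZY _ Ze) Ze (or_introl (conj Yx nZx)).
have CY : C `<=` Y by move=> z /CYZ [[|/ZY]].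
have CeY : C = Y by apply: minY => //; split=> //; apply: subset_trans CY YX.
have /CYZ [_] : C e by rewrite CeY; apply: ZY.
by case.
Qed.

Lemma bigcup_minimal_in X :
  F X -> X = \bigcup_(C in [set C | minimal_in F C /\ C `<=` X]) C.
Proof.
move=> FX; apply/seteqP; split=> [x Xx|x [C [_ CX] /CX] //].
by have [C minC [Cx CX]] := minimal_in_through FX Xx; exists C.
Qed.

End Indep.

Theorem lemma2p5 (E : Type) (F : set (set E)) :
  (forall X, F X -> finite_set X /\ X !=set0) ->
  strong_circuit_elimination F ->
  exists I : set (set E),
    [/\ is_finitary_matroid I,
        (forall C, circuit I C <-> minimal_in F C)
      & (forall X, F X -> exists S : set (set E),
            S `<=` circuit I /\ X = \bigcup_(C in S) C)].
Proof.
move=> F_fin_neq0 F_elim.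
have F_fin X (FX : F X) := (F_fin_neq0 X FX).1.
have F_neq0 X (FX : F X) := (F_fin_neq0 X FX).2.
exists (indep F); split=> [| |X FX].
- split; last by move=> C /circuit_indepE [/F_fin].
  split; [exact: indep0 | exact: indep_sub | exact: indep_exchange |].
  exact: indep_maximal_between.
- exact: circuit_indepE.
exists [set C | minimal_in F C /\ C `<=` X]; split; last exact: bigcup_minimal_in.
by move=> C [/circuit_indepE].
Qed.
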